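(* Let the labels $\{1,\dots,k\}$ be partitioned into $b\ge2$ blocks of sizes $s_1,\dots,s_b$ ($s_1+\dots+s_b=k$), and let $L_{01,b}(i,j)=[i\text{ and }j\text{ are not in the same block}]$ with quadratic surrogate $\Phi_{quad}(f,y)=\frac1{2k}\|f+L_{01,b}(:,y)\|_2^2$. Without constraints on the scores, $$H_{\Phi_{quad},L_{01,b},\mathbb{R}^k}(\varepsilon)=\frac{\varepsilon^2}{4k}\min_{v=1,\dots,b}\frac{2s_v}{s_v+1}\le\frac{\varepsilon^2}{2k},\qquad0\le\varepsilon\le1.$$
   Context: $\mathrm{pred}(f)$ is the smallest index maximizing $f_c$. For $q\in\Delta_k$: $\ell(f,q)=\sum_cq_cL(\mathrm{pred}(f),c)$, $\phi(f,q)=\sum_cq_c\Phi(f,c)$, $\delta\ell(f,q)=\ell(f,q)-\inf_{\hat f\in\mathcal{F}}\ell(\hat f,q)$, $\delta\phi(f,q)=\phi(f,q)-\inf_{\hat f\in\mathcal{F}}\phi(\hat f,q)$; calibration function $H_{\Phi,L,\mathcal{F}}(\varepsilon)=\inf\{\delta\phi(f,q):f\in\mathcal{F},q\in\Delta_k,\delta\ell(f,q)\ge\varepsilon\}$ ($+\infty$ if empty); here $\mathcal{F}=\mathbb{R}^k$. *)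

From HB Require Import structures.
From mathcomp Require Import all_boot all_order all_algebra.
From mathcomp Require Import all_classical all_reals all_analysis.
Set Implicit Arguments. Unset Strict Implicit. Unset Printing Implicit Defensive.
Import Order.TTheory GRing.Theory Num.Theory.
Local Open Scope ring_scope.
Local Open Scope classical_set_scope.

(* Labels are 'I_m.+1, i.e. k = m.+1 labels {0,...,k-1} (0-based version of {1..k}). *)
Section Defs.
Variable R : realType.
Variable m : nat.
Notation lab := 'I_m.+1.

Definition is_argmax (f : lab -> R) (c : lab) : bool := [forall j, f j <= f c].

(* pred(f): the smallest index maximizing f *)
Definition predf (f : lab -> R) : lab :=
  [arg min_(c < (Order.arg_max ord0 xpredT (fun i => f i)) | is_argmax f c) (c : nat)].

Definition simplex : set (lab -> R) :=
  [set q | (forall c, 0 <= q c) /\ \sum_(c : lab) q c = 1].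

Variable L : lab -> lab -> R.          (* task loss L(prediction, label) *)
Variable Phi : (lab -> R) -> lab -> R.

Definition ell (f : lab -> R) (q : lab -> R) : R := \sum_(c : lab) q c * L (predf f) c.
Definition phi (f : lab -> R) (q : lab -> R) : R := \sum_(c : lab) q c * Phi f c.

(* F = R^k: infimum over all score vectors *)
Definition dell (f q : lab -> R) : R := ell f q - inf [set ell g q | g in [set: lab -> R]].
Definition dphi (f q : lab -> R) : R := phi f q - inf [set phi g q | g in [set: lab -> R]].

(* calibration function; ereal_inf of the empty set is +oo *)
Definition calib (eps : R) : \bar R :=
  ereal_inf [set x : \bar R | exists (f q : lab -> R),
    [/\ simplex q, eps <= dell f q & x = (dphi f q)%:E]].
End Defs.

Definition L01b (R : realType) (m b : nat) (blk : 'I_m.+1 -> 'I_b)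
  (i j : 'I_m.+1) : R := if blk i == blk j then 0 else 1.

Definition Phiquad (R : realType) (m : nat) (L : 'I_m.+1 -> 'I_m.+1 -> R)
  (f : 'I_m.+1 -> R) (y : 'I_m.+1) : R :=
  (2 * m.+1%:R)^-1 * \sum_(c : 'I_m.+1) (f c + L c y) ^+ 2.

Definition blksize (m b : nat) (blk : 'I_m.+1 -> 'I_b) (v : 'I_b) : nat :=
  #|[set i | blk i == v]|.

(* For any loss L and any q, the quadratic surrogate has the unique minimiser g with
   g c = - sum_y q y L(c, y) (minus the conditional risk of predicting c), the excess
   surrogate risk is ||f - g||^2 / 2k, and the excess task risk is
   g (pred g) - g (pred f).  For the block loss g is constant on blocks.  If f predicts
   p outside the block B of i0 = pred g, every score f c with c in B lies below f p, so
   ||f - g||^2 >= (f p - g p)^2 + |B| max(0, g i0 - f p)^2, whose minimum over f p is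
   |B| / (|B| + 1) (g i0 - g p)^2.  Conversely, for q putting mass (1 +- eps)/2 on a label
   e of the block with the smallest ratio |B| / (|B| + 1) and on a label c of another
   block, the scores equal to the minimising value t on the block of e and to t + h at c
   approach this bound as h -> 0. *)

From HB Require Import structures.
From mathcomp Require Import all_boot all_order all_algebra.
From mathcomp Require Import all_classical all_reals all_analysis.
From mathcomp Require Import ring lra.

Set Implicit Arguments.
Unset Strict Implicit.
Unset Printing Implicit Defensive.

Import Order.TTheory GRing.Theory Num.Theory.
Local Open Scope ring_scope.
Local Open Scope classical_set_scope.

Lemma sqr_max0_le (R : realType) (x y d : R) : y <= x -> Num.max 0 (d - x) ^+ 2 <= (y - d) ^+ 2.
Proof.
move=> yx; have [dx|xd] := leP (d - x) 0.
  by rewrite expr0n /= sqr_ge0.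
rewrite -[(y - d) ^+ 2]sqrrN opprB ler_sqr ?nnegrE; lra.
Qed.

Lemma two_point_sqr_ge (R : realType) (S x a d : R) : 0 <= S -> a <= d ->
  S / (S + 1) * (d - a) ^+ 2 <= (x - a) ^+ 2 + S * Num.max 0 (d - x) ^+ 2.
Proof.
move=> S_ge0 ad; rewrite mulrAC ler_pdivrMr; last lra.
have [dx|xd] := leP (d - x) 0.
  rewrite expr0n /= mulr0 addr0.
  have : (d - a) ^+ 2 <= (x - a) ^+ 2 by rewrite ler_sqr ?nnegrE; lra.
  have := sqr_ge0 (d - a); nra.
have := sqr_ge0 ((x - a) - S * (d - x)); nra.
Qed.

Lemma two_point_sqr_excess (R : realType) (S a d h : R) : S + 1 != 0 ->
  ((a + S * d) / (S + 1) + h - a) ^+ 2 + S * ((a + S * d) / (S + 1) - d) ^+ 2 =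
  S / (S + 1) * (d - a) ^+ 2 + h * (2 * (S / (S + 1) * (d - a)) + h).
Proof. by move=> S1; field. Qed.

Section Predf.
Variables (R : realType) (m : nat).
Implicit Types (f : 'I_m.+1 -> R) (c : 'I_m.+1).

Lemma predf_max f j : f j <= f (predf f).
Proof.
rewrite /predf; have argmax_ok : is_argmax f [arg max_(i > ord0) f i]%O.
  by case: arg_maxP => // i _ Hi; apply/forallP => ?; exact: Hi.
by case: arg_minnP => // i /forallP.
Qed.

Lemma predf_eq f c : (forall j, j != c -> f j < f c) -> predf f = c.
Proof.
move=> fc_max; apply/eqP/negPn/negP => /fc_max.
by rewrite ltNge predf_max.
Qed.

End Predf.

Lemma inf_image_min (R : realType) (T : Type) (h : T -> R) (x : T) :
  (forall y, h x <= h y) -> inf [set h y | y in [set: T]] = h x.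
Proof.
move=> hx_min; apply/le_anti/andP; split.
  apply: ge_inf; last by exists x.
  by exists (h x) => _ [y _ <-].
apply: lb_le_inf; first by exists (h x), x.
by move=> _ [y _ <-].
Qed.

Section BayesScore.
Variables (R : realType) (m : nat) (L : 'I_m.+1 -> 'I_m.+1 -> R) (q : 'I_m.+1 -> R).
Local Notation k := (m.+1%:R : R).

Definition bayes_score (c : 'I_m.+1) : R := - \sum_y q y * L c y.
Local Notation g := bayes_score.

Lemma ell_bayes_score f : ell L f q = - g (predf f).
Proof. by rewrite /ell opprK. Qed.

Lemma dell_bayes_score f : dell L f q = g (predf g) - g (predf f).
Proof.
rewrite /dell (@inf_image_min _ _ (ell L ^~ q) g) => [|h].
  by rewrite ell_bayes_score (ell_bayes_score g) -opprD opprB.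
by rewrite /= (ell_bayes_score g) ell_bayes_score lerN2 predf_max.
Qed.

Hypothesis q_sum1 : \sum_y q y = 1.

Lemma phi_quad_subr_bayes f :
  phi (Phiquad L) f q - phi (Phiquad L) g q = (2 * k)^-1 * \sum_c (f c - g c) ^+ 2.
Proof.
rewrite /phi /Phiquad.
under eq_bigr do rewrite mulrCA.
under [X in _ - X]eq_bigr do rewrite mulrCA.
rewrite -!mulr_sumr -mulrBr -sumrB; congr (_ * _).
under eq_bigr do rewrite -mulrBr -sumrB mulr_sumr.
rewrite exchange_big; apply: eq_bigr => c _ /=.
have qL : \sum_y q y * L c y = - g c by rewrite opprK.
have -> : \sum_y q y * ((f c + L c y) ^+ 2 - (g c + L c y) ^+ 2) =
    (f c - g c) * (f c + g c) * \sum_y q y + 2 * (f c - g c) * \sum_y q y * L c y.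
  by rewrite !mulr_sumr -big_split; apply: eq_bigr => y _ /=; ring.
by rewrite q_sum1 qL; ring.
Qed.

Lemma dphi_quad f : dphi (Phiquad L) f q = (2 * k)^-1 * \sum_c (f c - g c) ^+ 2.
Proof.
rewrite /dphi (@inf_image_min _ _ (phi (Phiquad L) ^~ q) g) ?phi_quad_subr_bayes //.
move=> h; rewrite /= -subr_ge0 phi_quad_subr_bayes mulr_ge0 ?invr_ge0 ?mulr_ge0 //.
by rewrite sumr_ge0 // => c _; rewrite sqr_ge0.
Qed.

End BayesScore.

Section BlockLoss.
Variables (R : realType) (m b : nat) (blk : 'I_m.+1 -> 'I_b).
Local Notation L := (L01b R blk).
Local Notation k := (m.+1%:R : R).
Local Notation size v := ((blksize blk v)%:R : R).

Definition blk_ratio (v : 'I_b) : R := size v / (size v + 1).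

Lemma blk_ratio_ge0 v : 0 <= blk_ratio v.
Proof. by rewrite divr_ge0 ?addr_ge0. Qed.

Lemma blk_ratio_le1 v : blk_ratio v <= 1.
Proof. by rewrite ler_pdivrMr ?ltr_wpDl // mul1r lerDl. Qed.

Lemma bayes_score_blk q i j : blk i = blk j -> bayes_score L q i = bayes_score L q j.
Proof. by move=> ij; rewrite /bayes_score /L01b ij. Qed.

Lemma sum_blk_const v (x : R) : \sum_(c | blk c == v) x = x *+ blksize blk v.
Proof.
by rewrite sumr_const /blksize; congr (_ *+ _); apply: eq_card => c; rewrite [RHS]inE /= asboolb.
Qed.

Section BayesLowerBound.
Variable q : 'I_m.+1 -> R.
Local Notation g := (bayes_score L q).

Lemma sqdist_bayes_score_ge f :
  blk_ratio (blk (predf g)) * (g (predf g) - g (predf f)) ^+ 2 <= \sum_c (f c - g c) ^+ 2.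
Proof.
set i0 := predf g; set p := predf f; rewrite /blk_ratio; set S := size _.
have sqr_sum_ge0 (P : pred 'I_m.+1) : 0 <= \sum_(c | P c) (f c - g c) ^+ 2.
  by rewrite sumr_ge0 // => c _; rewrite sqr_ge0.
have [same|diff] := eqVneq (blk p) (blk i0).
  by rewrite (bayes_score_blk _ same) subrr expr0n mulr0 sqr_sum_ge0.
have blk_i0_ge : S * Num.max 0 (g i0 - f p) ^+ 2 <=
    \sum_(c | (c != p) && (blk c == blk i0)) (f c - g c) ^+ 2.
  rewrite (eq_bigl (fun c => blk c == blk i0)) => [|c]; last first.
    by apply: andb_idl => /eqP cblk; apply: contraNneq diff => <-; rewrite cblk.
  rewrite mulr_natl -sum_blk_const; apply: ler_sum => c /eqP/bayes_score_blk ->.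
  exact/sqr_max0_le/predf_max.
rewrite (bigD1 p) //= (bigID (fun c => blk c == blk i0)) /=.
have S_ge0 : 0 <= S by rewrite ler0n.
apply: le_trans (two_point_sqr_ge (f p) S_ge0 (predf_max g p)) _.
by rewrite lerD2l ler_wpDr ?sqr_sum_ge0.
Qed.

Lemma dphi_ge_dell f : simplex q ->
  dell L f q ^+ 2 / (2 * k) * blk_ratio (blk (predf g)) <= dphi (Phiquad L) f q.
Proof.
case=> _ q1; rewrite dphi_quad // dell_bayes_score mulrAC mulrC.
by rewrite ler_wpM2l ?invr_ge0 ?mulr_ge0 // mulrC sqdist_bayes_score_ge.
Qed.

End BayesLowerBound.

Section UpperWitness.
Variables (c e : 'I_m.+1) (eps : R).
Hypothesis ce : blk c != blk e.
Local Notation a := (- ((1 + eps) / 2)).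
Local Notation d := (- ((1 - eps) / 2)).
Local Notation S := (size (blk e)).
Local Notation t := ((a + S * d) / (S + 1)).

Definition witness_q (y : 'I_m.+1) : R :=
  if y == e then (1 + eps) / 2 else if y == c then (1 - eps) / 2 else 0.

Lemma sum_witness_q (h : 'I_m.+1 -> R) :
  \sum_y witness_q y * h y = (1 + eps) / 2 * h e + (1 - eps) / 2 * h c.
Proof.
have ce' : c != e by apply: contraNneq ce => ->.
rewrite (bigD1 e) // (bigD1 c) //= big1 ?addr0 => [|y /andP[yc ye]].
  by rewrite /witness_q eqxx (negbTE ce') eqxx.
by rewrite /witness_q (negbTE yc) (negbTE ye) mul0r.
Qed.

Lemma witness_q_sum1 : \sum_y witness_q y = 1.
Proof.
have := sum_witness_q (fun=> 1); under eq_bigr do rewrite mulr1.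
by move=> ->; lra.
Qed.

Lemma witness_q_simplex : 0 <= eps -> eps <= 1 -> simplex witness_q.
Proof.
move=> eps_ge0 eps_le1; split=> [y|]; last exact: witness_q_sum1.
by rewrite /witness_q; case: ifP => _; [|case: ifP => _]; lra.
Qed.

Local Notation g := (bayes_score L witness_q).

Lemma bayes_score_witness i :
  g i = if blk i == blk e then d else if blk i == blk c then a else -1.
Proof.
rewrite /bayes_score sum_witness_q /L01b.
case: eqP => [ie|_]; case: eqP => [ic|_] //; first by move: ce; rewrite -ic ie eqxx.
all: congr (- _); lra.
Qed.

Definition witness_f (h : R) (i : 'I_m.+1) : R :=
  if i == c then t + h else if blk i == blk e then t else g i.

Lemma predf_witness_f h : 0 <= eps -> eps <= 1 -> 0 < h -> predf (witness_f h) = c.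
Proof.
move=> eps_ge0 eps_le1 h_gt0.
have a_le_t : a <= t.
  by rewrite ler_pdivlMr ?ltr_wpDl //; have := ler0n R (blksize blk (blk e)); nra.
apply: predf_eq => j jc; rewrite /witness_f eqxx (negbTE jc).
case: ifP => [_|je]; first lra.
rewrite bayes_score_witness je; case: ifP => _; lra.
Qed.

Lemma dell_witness_f h : 0 <= eps -> eps <= 1 -> 0 < h ->
  eps <= dell L (witness_f h) witness_q.
Proof.
move=> eps_ge0 eps_le1 h_gt0; rewrite dell_bayes_score predf_witness_f //.
have := predf_max g e; rewrite !bayes_score_witness eqxx (negbTE ce) eqxx; lra.
Qed.

Lemma dphi_witness_f h :
  dphi (Phiquad L) (witness_f h) witness_q =
  (2 * k)^-1 * ((t + h - a) ^+ 2 + S * (t - d) ^+ 2).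
Proof.
rewrite dphi_quad ?witness_q_sum1 //.
congr (_ * _); rewrite (bigD1 c) //= (bigID (fun i => blk i == blk e)) /=.
rewrite [X in _ + (_ + X)]big1 => [|i /andP[ic ie]]; last first.
  by rewrite /witness_f (negbTE ic) (negbTE ie) subrr expr0n.
rewrite addr0 (eq_bigl (fun i => blk i == blk e)) => [|i]; last first.
  by apply: andb_idl => /eqP ie; apply: contraNneq ce => <-; rewrite ie.
rewrite (eq_bigr (fun=> (t - d) ^+ 2)) => [|i /eqP ie]; last first.
  rewrite /witness_f ie eqxx bayes_score_witness ie eqxx.
  by case: eqP => // ic; move: ce; rewrite -ic ie eqxx.
rewrite sum_blk_const -[_ ^+ 2 *+ _]mulr_natl /witness_f eqxx.
by rewrite bayes_score_witness (negbTE ce) eqxx.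
Qed.

End UpperWitness.

Lemma witness_dphi_le c e eps eta : blk c != blk e -> 0 <= eps -> eps <= 1 -> 0 < eta ->
  exists f q, [/\ simplex q, eps <= dell L f q &
    dphi (Phiquad L) f q <= eps ^+ 2 / (2 * k) * blk_ratio (blk e) + eta].
Proof.
move=> ce eps_ge0 eps_le1 eta_gt0; pose h := Num.min 1 (eta / 2).
have h_gt0 : 0 < h by rewrite lt_min ltr01 divr_gt0.
have h_le1 : h <= 1 by rewrite ge_min lexx.
have h_le_eta : h <= eta / 2 by rewrite ge_min lexx orbT.
exists (witness_f c e eps h), (witness_q c e eps); split.
- exact: witness_q_simplex.
- exact: dell_witness_f.
rewrite dphi_witness_f // two_point_sqr_excess ?gt_eqF ?ltr_wpDl // -/(blk_ratio (blk e)).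
have -> : - ((1 - eps) / 2) - - ((1 + eps) / 2) = eps :> R by lra.
have r_ge0 := blk_ratio_ge0 (blk e); have r_le1 := blk_ratio_le1 (blk e).
set r := blk_ratio _ in r_ge0 r_le1 *.
have -> : eps ^+ 2 / (2 * k) * r = (2 * k)^-1 * (r * eps ^+ 2) by ring.
rewrite mulrDr lerD2l.
have re_ge0 : 0 <= r * eps := mulr_ge0 r_ge0 eps_ge0.
have excess_le : h * (2 * (r * eps) + h) <= h * 3.
  by rewrite ler_pM2l //; have := mulr_ile1 r_ge0 eps_ge0 r_le1 eps_le1; lra.
have k_ge1 : 1 <= k by rewrite ler1n.
have k_inv_le : (2 * k)^-1 <= 2^-1 by rewrite lef_pV2 ?posrE; lra.
have : (2 * k)^-1 * (h * (2 * (r * eps) + h)) <= 2^-1 * (h * 3).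
  by apply: ler_pM => //; rewrite ?invr_ge0 ?mulr_ge0 //; lra.
move/le_trans; apply; lra.
Qed.

Lemma calib_quad_blk c e eps : blk c != blk e -> 0 <= eps -> eps <= 1 ->
  (forall v, blk_ratio (blk e) <= blk_ratio v) ->
  calib L (Phiquad L) eps = (eps ^+ 2 / (2 * k) * blk_ratio (blk e))%:E.
Proof.
move=> ce eps_ge0 eps_le1 e_min; apply/le_anti/andP; split.
  apply/lee_addgt0Pr => eta eta_gt0.
  have [f [q [qS eps_le dphi_le]]] := witness_dphi_le ce eps_ge0 eps_le1 eta_gt0.
  apply: ge_ereal_inf; exists (dphi (Phiquad L) f q)%:E; first by exists f, q.
  by rewrite -EFinD lee_fin.
apply/ereal_infP => _ [f [q [qS eps_le ->]]]; rewrite lee_fin.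
apply: le_trans (dphi_ge_dell f qS); apply: ler_pM => //.
- by rewrite divr_ge0 ?sqr_ge0 ?mulr_ge0.
- exact: blk_ratio_ge0.
- by apply: ler_wpM2r; rewrite ?invr_ge0 ?mulr_ge0 ?ler_sqr ?nnegrE //; lra.
Qed.

End BlockLoss.

Lemma bigmine_EFin_arg (R : realType) (I : finType) (i0 : I) (F : I -> R) :
  exists2 j, \big[mine/+oo%E]_i (F i)%:E = (F j)%:E & forall i, F j <= F i.
Proof.
rewrite (bigmin_eq_arg _ i0 xpredT) => // [|i _]; last exact: leey.
by case: arg_minP => // j _ j_min; exists j => // i; rewrite -lee_fin j_min.
Qed.

Theorem proposition13 (R : realType) (m b : nat) (blk : 'I_m.+1 -> 'I_b)
  (hb : (2 <= b)%N) (hsurj : forall v : 'I_b, exists i, blk i = v)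
  (eps : R) (heps0 : 0 <= eps) (heps1 : eps <= 1) :
  let k : R := m.+1%:R in
  let L := L01b R blk in
  let s (v : 'I_b) : R := (blksize blk v)%:R in
  let mn : \bar R := \big[mine/+oo%E]_(v < b) ((2 * s v) / (s v + 1))%:E in
  calib L (Phiquad L) eps = ((eps ^+ 2 / (4 * k))%:E * mn)%E /\
  ((eps ^+ 2 / (4 * k))%:E * mn <= (eps ^+ 2 / (2 * k))%:E)%E.
Proof.
move=> k L s mn; pose r := blk_ratio R blk.
have [w mn_w w_min] := bigmine_EFin_arg (Ordinal hb) (fun v => 2 * s v / (s v + 1)).
have weight_ratio v : 2 * s v / (s v + 1) = 2 * r v by rewrite mulrA.
rewrite /mn mn_w -EFinM weight_ratio.
rewrite (_ : _ * (2 * r w) = eps ^+ 2 / (2 * k) * r w); last first.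
  by field; rewrite gt_eqF //; have := ler0n R m; lra.
split; last first.
  by rewrite lee_fin ler_piMr ?divr_ge0 ?sqr_ge0 ?mulr_ge0 //; exact: blk_ratio_le1.
have [u uw] : exists u : 'I_b, u != w.
  have [->|wb] := eqVneq w (Ordinal hb); last by exists (Ordinal hb); rewrite eq_sym.
  by exists (Ordinal (ltnW hb)).
have [c cu] := hsurj u; have [e ew] := hsurj w; subst u w.
apply: calib_quad_blk uw heps0 heps1 _ => v.
by have := w_min v; rewrite !weight_ratio ler_pM2l.
Qed.
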